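(* For every $\epsilon_1,\epsilon_2>0$ there exists $\delta>0$ such that every $(d-1)$-dimensional simplicial complex $\Gamma$ with $n$ vertices satisfying $\mathrm{gr}_1(\Gamma)>4$ and $d<\delta n$ contains at most $\epsilon_1 n$ vertices of degree at least $\epsilon_2 n$.
   Context: A simplicial complex $\Gamma$ on a finite vertex set $V=V(\Gamma)$ is a family of subsets of $V$ (faces) closed under taking subsets; its dimension is $\max\{|F|:F\in\Gamma\}-1$. The degree of a vertex $v$ is the number of 2-element faces (edges) containing $v$. For $W\subseteq V$, $\Gamma[W]=\{F\in\Gamma:F\subseteq W\}$. For a face $F$ (possibly empty), $\mathrm{lk}_\Gamma(F)=\{G\setminus F: F\subseteq G\in\Gamma\}$. Fix a field $\mathbf{k}$; $\tilde H_i(\cdot;\mathbf{k})$ is reduced simplicial homology. The $1$-girth is $\mathrm{gr}_{1}(\Gamma)=\min\{|W|: W\subseteq V(\Gamma),\ \tilde H_{1}(\mathrm{lk}_\Gamma(F)[W];\mathbf{k})\neq 0 \text{ for some face } F\in\Gamma \text{ (including } F=\emptyset)\}$, or $\infty$ if none exists. *)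

From HB Require Import structures.
From mathcomp Require Import all_boot all_order all_algebra.
Set Implicit Arguments. Unset Strict Implicit. Unset Printing Implicit Defensive.
Import Order.TTheory GRing.Theory Num.Theory.

(* A simplicial complex on the finite vertex set T: a nonempty family of
   subsets of T closed under subsets, in which every element of T is a
   vertex (so V(G) = T and n = #|T|). *)
Definition is_complex (T : finType) (G : {set {set T}}) : Prop :=
  set0 \in G /\
  (forall v : T, [set v] \in G) /\
  (forall F H : {set T}, F \in G -> H \subset F -> H \in G).

(* G has dimension d-1, i.e. the maximal face size is d. *)
Definition has_dim_plus1 (T : finType) (G : {set {set T}}) (d : nat) : Prop :=
  (exists2 F, F \in G & #|F| = d) /\ (forall F, F \in G -> #|F| <= d).

Definition degree (T : finType) (G : {set {set T}}) (v : T) : nat :=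
  #|[set F in G | (#|F| == 2) && (v \in F)]|.

Definition induced (T : finType) (G : {set {set T}}) (W : {set T}) : {set {set T}} :=
  [set F in G | F \subset W].

Definition link (T : finType) (G : {set {set T}}) (F : {set T}) : {set {set T}} :=
  [set H :\: F | H in [set H in G | F \subset H]].

(* Oriented simplicial boundary map from i-faces (size i+1) to (i-1)-faces
   (size i) of G, with orientation induced by the enumeration order of T.
   It is written as a square matrix indexed by all subsets of T (acting on
   row vectors); rows / columns not corresponding to faces of the right
   size are zero.  The entry for tau = sigma \ {x} is (-1)^(position of x
   in sigma). *)
Definition bsign (K : fieldType) (T : finType) (sigma tau : {set T}) : K :=
  \sum_(x in sigma :\: tau)
     ((-1) ^+ #|[set y in sigma | (nat_of_ord (enum_rank y) < enum_rank x)%N]|)%R.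

Definition boundary (K : fieldType) (T : finType) (G : {set {set T}}) (i : nat)
  : 'M[K]_(#|{set T}|) :=
  \matrix_(a < #|{set T}|, b < #|{set T}|)
    (let sigma : {set T} := enum_val a in let tau : {set T} := enum_val b in
     if [&& sigma \in G, #|sigma| == i.+1, tau \subset sigma & #|tau| == i]
     then bsign K sigma tau else 0%R).

Definition nfaces (T : finType) (G : {set {set T}}) (i : nat) : nat :=
  #|[set F in G | #|F| == i.+1]|.

(* dim_K of reduced homology H~_i(G; K) = dim ker d_i - dim im d_{i+1}
   (the augmentation d_0 maps vertices to the empty face). *)
Definition rbetti (K : fieldType) (T : finType) (G : {set {set T}}) (i : nat) : nat :=
  (nfaces G i - \rank (boundary K G i)) - \rank (boundary K G i.+1).

(* gr_1(G) > m : every W with H~_1(lk_G(F)[W]; K) <> 0 for some face F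
   (including the empty face) has more than m elements. *)
Definition gr1_gt (K : fieldType) (T : finType) (G : {set {set T}}) (m : nat) : Prop :=
  forall (F W : {set T}), F \in G ->
    rbetti K (induced (link G F) W) 1 <> 0 -> m < #|W|.

(* Proof.  (1) First homology of a small vertex set W: a subcomplex on W
   without 2-faces but with at least |W| edges has nonzero H_1, because the
   edge boundary has rank at most |W| - 1 (rbetti1_neq0).
   (2) Hence gr_1(G) > 4 makes G a flag complex (every clique of its
   1-skeleton is a face, so cliques have at most d vertices) whose
   1-skeleton has no induced 4-cycle (two non-adjacent vertices have a
   clique as common neighbourhood), see clique_face, skel_common_nb_clique.
   (3) In any graph with these two properties, take a maximum independent
   set I inside the set A of high-degree vertices: A is covered by I, the
   private neighbourhoods of I (cliques) and common neighbourhoods of pairs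
   of I, so |A| <= |I| + |I| d + |I|^2 d; and double counting shows that k
   independent vertices have at most n + k^2 d incident edges
   (card_few_high_degree, card_high_degree).
   (4) Choosing k with 2 <= k e2 < 3 and delta = e1 e2^2 / 27 (after capping
   e1, e2 at 1) gives |A| <= 3 k^2 d < e1 n. *)

From HB Require Import structures.
From mathcomp Require Import all_boot all_order all_algebra.
From mathcomp Require Import zify ring lra.

Set Implicit Arguments. Unset Strict Implicit. Unset Printing Implicit Defensive.
Import Order.TTheory GRing.Theory Num.Theory.

Section FirstHomology.

Local Open Scope ring_scope.

(* The two boundary coefficients of an edge {x, y} have opposite signs; the
   sign of the coefficient of {x} only records whether x precedes y. *)
Lemma bsign_edge (K : fieldType) (T : finType) (x y : T) : x != y ->
  bsign K [set x; y] [set x] = (-1) ^+ (enum_rank x < enum_rank y)%N.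
Proof.
move=> xy; rewrite /bsign.
have -> : [set x; y] :\: [set x] = [set y].
  apply/setP => z; rewrite !inE.
  case: (eqVneq z y) => [->|_]; first by rewrite orbT andbT eq_sym xy.
  by rewrite orbF; case: (z == x).
rewrite big_set1; congr (_ ^+ _).
have -> : [set z in [set x; y] | (enum_rank z < enum_rank y)%N] =
          if (enum_rank x < enum_rank y)%N then [set x] else set0.
  apply/setP => z; rewrite !inE.
  case: (eqVneq z x) => [->|zx] /=; first by case: ifP; rewrite ?inE ?eqxx.
  case: (eqVneq z y) => [->|zy] /=; rewrite ?ltnn; case: ifP; rewrite ?inE //.
    by rewrite eq_sym (negbTE xy).
  by rewrite (negbTE zx).
by case: ifP; rewrite ?cards1 ?cards0.
Qed.

Lemma bsign_edge_sum (K : fieldType) (T : finType) (sig : {set T}) :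
  #|sig| = 2 -> \sum_(i in sig) bsign K sig [set i] = 0.
Proof.
move/eqP/cards2P => [x [y [xy ->]]].
rewrite big_setU1 /=; last by rewrite inE.
rewrite big_set1 bsign_edge // setUC bsign_edge 1?eq_sym //.
case: (ltngtP (enum_rank x) (enum_rank y)) => [_|_|/ord_inj/enum_rank_inj exy].
- by rewrite expr1 expr0 addNr.
- by rewrite expr1 expr0 addrN.
- by rewrite exy eqxx in xy.
Qed.

(* A matrix supported on the columns in a nonempty set S, all of whose rows
   sum to zero, has rank at most |S| - 1: it factors through the
   (|S| - 1)-dimensional space of vectors on S with zero sum. *)
Lemma mxrank_zero_rowsum (K : fieldType) m N (A : 'M[K]_(m, N)) (S : {set 'I_N}) j0 :
  j0 \in S -> (forall i j, j \notin S -> A i j = 0) ->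
  (forall i, \sum_(j in S) A i j = 0) -> (\rank A <= #|S|.-1)%N.
Proof.
move=> j0S Aout Asum; set S' := S :\ j0.
pose X : 'M[K]_(m, #|S'|) := \matrix_(i, k) A i (enum_val k).
pose Y : 'M[K]_(#|S'|, N) := \matrix_(k, j) ((j == enum_val k)%:R - (j == j0)%:R).
have -> : A = X *m Y.
  apply/matrixP => i j; rewrite !mxE.
  under eq_bigr do rewrite !mxE.
  rewrite -(big_enum_val (A := mem S') (fun l => A i l * ((j == l)%:R - (j == j0)%:R))).
  under eq_bigr do rewrite mulrBr.
  rewrite sumrB -mulr_suml.
  have -> : \sum_(l in S') A i l = - A i j0.
    by apply/eqP; rewrite -addr_eq0 addrC -big_setD1 //= Asum.
  have -> : \sum_(l in S') A i l * (j == l)%:R = if j \in S' then A i j else 0.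
    case: ifP => jS.
      rewrite (big_setD1 j) //= eqxx mulr1 big1 ?addr0 // => l /setD1P [lj _].
      by rewrite eq_sym (negbTE lj) mulr0.
    rewrite big1 // => l lS; case: eqP => [jl|]; last by rewrite mulr0.
    by rewrite jl lS in jS.
  case: (eqVneq j j0) => [->|jj0]; first by rewrite !inE eqxx mulr1 sub0r opprK.
  rewrite mulr0 subr0 !inE jj0 /=.
  by case: ifP => // jS; rewrite Aout // jS.
apply: leq_trans (mxrankM_maxl _ _) _; apply: leq_trans (rank_leq_col _) _.
by rewrite (cardsD1 j0 S) j0S.
Qed.

(* A complex X on vertices in a nonempty set W, without 2-dimensional faces
   and with at least |W| edges, has nonzero first homology: the rank of the
   edge boundary is at most |W| - 1 since vertex coefficients sum to zero. *)
Lemma rbetti1_neq0 (K : fieldType) (T : finType) (X : {set {set T}}) (W : {set T}) :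
  (forall P, P \in X -> P \subset W) -> (forall P, P \in X -> #|P| != 3%N) ->
  (0 < #|W|)%N -> (#|W| <= nfaces X 1)%N -> rbetti K X 1 != 0%N.
Proof.
move=> XW X3 W0 WX; rewrite /rbetti.
have -> : boundary K X 2 = 0.
  apply/matrixP => a b; rewrite !mxE /=.
  by case: ifP => // /and4P [/X3 + /eqP P3]; rewrite P3.
rewrite mxrank0 subn0.
set S := [set enum_rank F | F in [set [set w] | w in W]].
have cS : #|S| = #|W|.
  by rewrite !card_imset //; [apply: set1_inj | apply: enum_rank_inj].
have [w0 w0W] : exists w0, w0 \in W by apply/set0Pn; rewrite -card_gt0.
suff rk : (\rank (boundary K X 1) <= #|S|.-1)%N.
  rewrite -lt0n subn_gt0; apply: leq_trans WX; apply: leq_ltn_trans rk _.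
  by rewrite cS prednK.
apply: (@mxrank_zero_rowsum _ _ _ _ S (enum_rank [set w0])); first by do 2 apply: imset_f.
  move=> a b bS; rewrite mxE /=.
  case: ifP => // /and4P [sX _ tsub /cards1P [w tw]].
  case/negP: bS; rewrite -(enum_valK b) tw; do 2 apply: imset_f.
  by apply: (subsetP (XW _ sX)); apply: (subsetP tsub); rewrite tw set11.
move=> a.
rewrite big_imset /=; last by move=> ? ? _ _; apply: enum_rank_inj.
rewrite big_imset /=; last by move=> ? ? _ _; apply: set1_inj.
under eq_bigr do rewrite mxE enum_rankK.
rewrite /=; set sig := enum_val a.
case: (boolP (sig \in X)) => sX /=; last by rewrite big1.
case: (boolP (#|sig| == 2%N)) => /= /eqP s2; last by rewrite big1.
rewrite -big_mkcondr /= -[RHS](bsign_edge_sum K s2); apply: eq_bigl => i.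
rewrite sub1set cards1 eqxx andbT.
by apply/andP/idP => [[]//|iS]; split=> //; apply: (subsetP (XW _ sX)).
Qed.

End FirstHomology.

Lemma card_bigcup_le (T I : finType) (P : pred I) (X : I -> {set T}) :
  #|\bigcup_(i | P i) X i| <= \sum_(i | P i) #|X i|.
Proof.
elim/big_rec2: _ => [|i B n _ IH]; first by rewrite cards0.
by rewrite (leq_trans (leq_card_setU _ _)) // leq_add2l.
Qed.

(* Bonferroni-type double counting: a point lying in m of the sets N u is
   counted m times on the left and 1 + m (m - 1) >= m times on the right. *)
Lemma sum_card_le_pairs (T I : finType) (J : {set I}) (N : I -> {set T}) :
  \sum_(u in J) #|N u| <=
  #|T| + \sum_(u in J) \sum_(v in J | v != u) #|N u :&: N v|.
Proof.
have cardE (A : {set T}) : #|A| = \sum_x (x \in A : nat).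
  by rewrite -sum1_card big_mkcond /=; apply: eq_bigr => x _; case: (x \in A).
pose f x u : nat := x \in N u.
pose pairs x := \sum_(u in J) \sum_(v in J | v != u) f x u * f x v.
have pointwise x : \sum_(u in J) f x u <= 1 + pairs x.
  suff : (\sum_(u in J) f x u) * (\sum_(u in J) f x u) = \sum_(u in J) f x u + pairs x.
    by move: (\sum_(u in J) f x u) (pairs x) => m p; nia.
  rewrite big_distrl /= -big_split /=; apply: eq_bigr => u uJ.
  rewrite big_distrr /= (bigD1 u uJ) /=; congr (_ + _).
  by rewrite /f; case: (x \in N u).
under eq_bigr do rewrite cardE.
rewrite exchange_big /=.
apply: (@leq_trans (\sum_x (1 + pairs x))); first by apply: leq_sum => x _; apply: pointwise.
rewrite big_split /= sum1_card leq_add2l /pairs exchange_big /=.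
apply: leq_sum => u uJ; rewrite exchange_big /=; apply: leq_sum => v _.
by rewrite cardE; apply/eq_leq/eq_bigr => x _; rewrite inE mulnb.
Qed.

Section CliqueBoundedGraphs.

Variables (T : finType) (adj : rel T) (d : nat).
Hypothesis adj_sym : symmetric adj.

Definition nb (v : T) : {set T} := [set w | adj v w].

Definition clique (C : {set T}) : Prop :=
  forall a b, a \in C -> b \in C -> a != b -> adj a b.

Definition indep (J : {set T}) : bool :=
  [forall u in J, [forall v in J, (u != v) ==> ~~ adj u v]].

Lemma indepP (J : {set T}) :
  reflect (forall u v, u \in J -> v \in J -> u != v -> ~~ adj u v) (indep J).
Proof.
apply: (iffP forall_inP) => [h u v uJ vJ uv | h u uJ].
  by move/forall_inP: (h u uJ) => /(_ v vJ) /implyP; apply.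
by apply/forall_inP => v vJ; apply/implyP; apply: h.
Qed.

Lemma indep_sub (J J' : {set T}) : J' \subset J -> indep J -> indep J'.
Proof.
by move=> sJ /indepP h; apply/indepP => u v uJ vJ; apply: h; exact: (subsetP sJ).
Qed.

Lemma indep_add x (J : {set T}) :
  indep J -> (forall w, w \in J -> w != x -> ~~ adj w x) -> indep (x |: J).
Proof.
move=> /indepP h hx; apply/indepP => p q; rewrite !in_setU1.
case: (eqVneq p x) => [->|px] /=; case: (eqVneq q x) => [->|qx] //=.
- by move=> _ qJ _; rewrite adj_sym; apply: hx.
- by move=> pJ _ _; apply: hx.
- exact: h.
Qed.

Hypothesis clique_small : forall C, clique C -> #|C| <= d.
Hypothesis common_nb_clique :
  forall u v, u != v -> ~~ adj u v -> clique (nb u :&: nb v).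

(* The neighbourhoods of the vertices of an independent set J pairwise
   share at most d vertices, so their sizes add up to at most
   n + |J|^2 d. *)
Lemma sum_nb_indep (J : {set T}) :
  indep J -> \sum_(u in J) #|nb u| <= #|T| + #|J| * (#|J| * d).
Proof.
move=> /indepP iJ; apply: leq_trans (sum_card_le_pairs J nb) _.
rewrite leq_add2l -sum_nat_const; apply: leq_sum => u uJ.
apply: (@leq_trans (\sum_(v in J | v != u) d)).
  by apply: leq_sum => v /andP [vJ vu]; apply/clique_small/common_nb_clique;
     rewrite 1?eq_sym // iJ // eq_sym.
by rewrite -sum_nat_const (bigD1 u uJ) /= leq_addl.
Qed.

(* A maximum independent subset I of A controls the size of A: every other
   vertex of A is either a private neighbour of a single u in I (and those
   form a clique) or a common neighbour of two vertices of I. *)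
Section MaximumIndependentSet.

Variables (A I : {set T}).
Hypotheses (IA : I \subset A) (indepI : indep I).
Hypothesis Imax : forall J : {set T}, J \subset A -> indep J -> #|J| <= #|I|.

Definition private_nb (u : T) : {set T} :=
  [set y in A | (y \notin I) && ([set w in I | adj w y] == [set u])].

(* Two non-adjacent private neighbours y, z of u could replace u in I,
   contradicting maximality. *)
Lemma private_nb_clique u : u \in I -> clique (private_nb u).
Proof.
have private_nonadj y w : y \in private_nb u -> w \in I -> w != u -> ~~ adj w y.
  rewrite inE => /and3P [_ _ /eqP /setP /(_ w)].
  by rewrite !inE => h wI wu; apply/negP => awy; rewrite wI awy (negbTE wu) in h.
move=> uI y z yB zB yz; apply/negPn/negP => nyz.
move: (yB) (zB); rewrite !inE => /and3P [yA yI _] /and3P [zA zI _].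
pose J := y |: (z |: (I :\ u)).
have JA : J \subset A.
  apply/subsetP => p; rewrite !in_setU1 in_setD1.
  by case/or3P => [/eqP -> | /eqP -> | /andP [_ /(subsetP IA)]].
have iJ : indep J.
  apply: indep_add; first apply: indep_add.
  - exact: indep_sub (subsetDl I [set u]) indepI.
  - by move=> w /setD1P [wu wI] _; exact: private_nonadj zB wI wu.
  - move=> w /setU1P [-> _ | /setD1P [wu wI] _]; first by rewrite adj_sym.
    exact: private_nonadj yB wI wu.
have := Imax JA iJ.
rewrite cardsU1 cardsU1 in_setU1 !in_setD1 (negbTE yz) (negbTE yI) (negbTE zI) /= !andbF.
by rewrite (cardsD1 u I) uI ltnn.
Qed.

(* A vertex of A outside I has a neighbour in I (by maximality), hence
   either exactly one or at least two of them. *)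
Lemma max_indep_cover : A \subset I :|: (\bigcup_(u in I) private_nb u) :|:
  (\bigcup_(u in I) \bigcup_(v in I | v != u) (nb u :&: nb v)).
Proof.
apply/subsetP => x xA; rewrite !in_setU.
case: (boolP (x \in I)) => xI //=.
set S := [set w in I | adj w x].
case: (set_0Vmem S) => [S0 | [u uS]].
  have iJ : indep (x |: I).
    apply: indep_add => // w wI _; apply/negP => awx.
    have : w \in S by rewrite inE wI awx.
    by rewrite S0 inE.
  have : #|x |: I| <= #|I|.
    by apply: Imax => //; apply/subsetP => p /setU1P [-> // | /(subsetP IA)].
  by rewrite cardsU1 xI ltnn.
move: (uS); rewrite inE => /andP [uI aux].
case: (eqVneq S [set u]) => Su.
  by apply/orP; left; apply/bigcupP; exists u => //; rewrite inE xA xI; apply/eqP.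
have [v vS] : exists v, v \in S :\ u.
  apply/set0Pn; apply: contra_neq Su => E.
  by rewrite -(setD1K uS) E setU0.
move: vS; rewrite in_setD1 inE => /andP [vu /andP [vI avx]].
apply/orP; right; apply/bigcupP; exists u => //; apply/bigcupP; exists v.
  by rewrite vI vu.
by rewrite !inE aux avx.
Qed.

Lemma card_max_indep : #|A| <= #|I| + #|I| * d + #|I| * (#|I| * d).
Proof.
apply: leq_trans (subset_leq_card max_indep_cover) _.
apply: leq_trans (leq_card_setU _ _) _; apply: leq_add.
  apply: leq_trans (leq_card_setU _ _) _; rewrite leq_add2l.
  apply: leq_trans (card_bigcup_le _ _) _.
  by rewrite -sum_nat_const; apply: leq_sum => u uI; apply/clique_small/private_nb_clique.
apply: leq_trans (card_bigcup_le _ _) _.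
rewrite -sum_nat_const; apply: leq_sum => u uI.
apply: leq_trans (card_bigcup_le _ _) _.
rewrite -sum_nat_const (bigD1 u uI) /=; apply: leq_trans (leq_addl d _).
apply: leq_sum => v /andP [vI vu]; apply/clique_small/common_nb_clique; first by rewrite eq_sym.
by move/indepP: indepI; apply => //; rewrite eq_sym.
Qed.

End MaximumIndependentSet.

(* If the degrees of every k-element independent subset of A add up to more
   than n + k^2 d, then A has at most k + k d + k^2 d vertices: by
   sum_nb_indep a maximum independent subset of A has fewer than k
   elements, and card_max_indep applies. *)
Lemma card_few_high_degree (A : {set T}) (k : nat) :
  (forall J : {set T}, J \subset A -> indep J -> #|J| = k ->
     #|T| + k * (k * d) < \sum_(u in J) #|nb u|) ->
  #|A| <= k + k * d + k * (k * d).
Proof.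
move=> hJ.
have P0 : (set0 \subset A) && indep set0.
  by rewrite sub0set; apply/indepP => u v; rewrite inE.
case: (@arg_maxnP _ set0 (fun J => (J \subset A) && indep J) (fun J => #|J|) P0).
move=> I /andP [IA iI] Imax.
have Imax' (J : {set T}) : J \subset A -> indep J -> #|J| <= #|I|.
  by move=> JA iJ; apply: Imax; rewrite JA.
have cA := card_max_indep IA iI Imax'.
case: (ltnP #|I| k) => Ik.
  by apply: leq_trans cA _; rewrite !leq_add ?leq_mul // ltnW.
have [s [us ks sI]] := card_geqP Ik.
pose J := [set x in s].
have cJ : #|J| = k by rewrite cardsE (card_uniqP us).
have JI : J \subset I by apply/subsetP => x; rewrite inE => /sI.
have iJ := indep_sub JI iI.
have := hJ J (subset_trans JI IA) iJ cJ.
by rewrite ltnNge -{1 2}cJ sum_nb_indep.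
Qed.

End CliqueBoundedGraphs.

Lemma link_mem (T : finType) (G : {set {set T}}) (F P : {set T}) :
  [disjoint P & F] -> (P \in link G F) = (P :|: F \in G).
Proof.
move=> dPF; apply/imsetP/idP => [[H] | PG].
  rewrite inE => /andP [HG FH] ->.
  have -> : H :\: F :|: F = H.
    apply/setP => z; rewrite !inE.
    by case: (boolP (z \in F)) => zF; rewrite ?orbF ?orbT // (subsetP FH).
  exact: HG.
exists (P :|: F); first by rewrite inE PG subsetUr.
apply/setP => z; rewrite !inE; case: (boolP (z \in F)) => zF; last by rewrite orbF.
by rewrite (disjointFl dPF zF).
Qed.

Lemma nfaces1_ge (T : finType) (X : {set {set T}}) (s : seq {set T}) :
  uniq s -> (forall P, P \in s -> (P \in X) && (#|P| == 2)) -> size s <= nfaces X 1.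
Proof.
move=> us sX; rewrite /nfaces -(card_uniqP us).
by apply: subset_leq_card; apply/subsetP => P Ps; rewrite inE; exact: sX.
Qed.

Definition skel_adj (T : finType) (G : {set {set T}}) : rel T :=
  fun x y => (x != y) && ([set x; y] \in G).

Lemma skel_adj_sym (T : finType) (G : {set {set T}}) : symmetric (skel_adj G).
Proof. by move=> x y; rewrite /skel_adj eq_sym setUC. Qed.

Lemma degree_nb (T : finType) (G : {set {set T}}) v :
  degree G v = #|nb (skel_adj G) v|.
Proof.
rewrite /degree.
have -> : [set F in G | (#|F| == 2) && (v \in F)] =
          (fun w => [set v; w]) @: nb (skel_adj G) v.
  apply/setP => F; rewrite inE; apply/andP/imsetP.
    move=> [FG /andP [/cards2P [a [b [ab Fab]]] vF]].
    rewrite Fab in FG vF *.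
    case/set2P: vF => ->; first by exists b; rewrite // inE /skel_adj ab FG.
    by exists a; rewrite 1?setUC // inE /skel_adj eq_sym ab setUC FG.
  move=> [w]; rewrite inE => /andP [vw vwG] ->.
  by rewrite vwG cards2 vw set21.
apply: card_in_imset => w1 w2; rewrite !inE => /andP [v1 _] _ /setP /(_ w1).
by rewrite !in_set2 eqxx orbT eq_sym (negbTE v1) => /esym/eqP.
Qed.

Lemma set2_neq (T : finType) (a b c d w : T) :
  w \in [set a; b] -> w \notin [set c; d] -> [set a; b] != [set c; d].
Proof. by move=> wab; apply: contraNneq => <-. Qed.

Lemma sub_set2 (T : finType) (P : {set T}) a b :
  a \in P -> b \in P -> [set a; b] \subset P.
Proof. by move=> aP bP; apply/subsetP => z /set2P [] ->. Qed.

Lemma card_miss2 (T : finType) (W P : {set T}) p q : p \in W -> q \in W -> p != q ->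
  p \notin P -> q \notin P -> P \subset W -> #|P| <= #|W| - 2.
Proof.
move=> pW qW pq pP qP PW.
have -> : #|W| - 2 = #|W :\ p :\ q|.
  rewrite (cardsD1 p W) pW (cardsD1 q (W :\ p)) !inE eq_sym pq qW /=.
  by rewrite !add1n !subSS subn0.
apply: subset_leq_card; apply/subsetP => z zP; rewrite !inE (subsetP PW) // andbT.
by apply/andP; split; apply: contraTneq zP => ->.
Qed.

Section FlagComplexes.

Variables (K : fieldType) (T : finType) (G : {set {set T}}).
Hypothesis gr : gr1_gt K G 4.
Hypothesis cG : is_complex G.

Lemma face_down (F P : {set T}) : F \in G -> P \subset F -> P \in G.
Proof. by have [_ [_ down]] := cG; apply: down. Qed.

(* On a vertex set W of size at most 4 the induced subcomplex of any link
   with at least |W| edges has a 2-dimensional face: otherwise its first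
   homology would not vanish. *)
Lemma small_link_triangle (F W : {set T}) : F \in G -> (0 < #|W| <= 4) ->
  #|W| <= nfaces (induced (link G F) W) 1 ->
  exists2 P, P \in link G F & (P \subset W) && (#|P| == 3).
Proof.
move=> FG /andP [W0 W4] WX.
apply/exists_inP; apply: contraT => noP.
have : rbetti K (induced (link G F) W) 1 != 0.
  apply: rbetti1_neq0 W0 WX => [P | P]; rewrite inE => /andP [PL PW] //.
  by apply: contra noP => P3; apply/exists_inP; exists P; rewrite // PW.
by move/eqP/(gr FG); rewrite ltnNge W4.
Qed.

Lemma triangle_filled (F : {set T}) a b c :
  a != b -> a != c -> b != c -> a \notin F -> b \notin F -> c \notin F ->
  [set a; b] :|: F \in G -> [set a; c] :|: F \in G -> [set b; c] :|: F \in G ->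
  [set a; b; c] :|: F \in G.
Proof.
move=> ab ac bc aF bF cF abG acG bcG.
set W := [set a; b; c].
have W3 : #|W| = 3.
  by rewrite /W -setUA cardsU1 !inE (negbTE ab) (negbTE ac) /= cards2 bc.
have [aW bW cW] : [/\ a \in W, b \in W & c \in W] by rewrite !inE !eqxx ?orbT.
have dW (P : {set T}) : P \subset W -> [disjoint P & F].
  move=> PW; rewrite disjoints_subset; apply/subsetP => z /(subsetP PW).
  by rewrite !inE -orbA => /or3P [] /eqP ->.
have FG : F \in G by apply: face_down abG _; apply: subsetUr.
have edge x y : x != y -> x \in W -> y \in W -> [set x; y] :|: F \in G ->
    ([set x; y] \in induced (link G F) W) && (#|[set x; y]| == 2).
  move=> xy xW yW h; rewrite inE cards2 xy sub_set2 // !andbT link_mem //.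
  exact/dW/sub_set2.
have Wsmall : 0 < #|W| <= 4 by rewrite W3.
have Wedges : #|W| <= nfaces (induced (link G F) W) 1.
  rewrite W3; apply: (@nfaces1_ge _ _ [:: [set a; b]; [set a; c]; [set b; c]]).
    rewrite /= !inE !negb_or andbT -andbA; apply/and3P; split.
    + apply: (set2_neq (w := b)); rewrite !inE ?eqxx ?orbT //.
      by rewrite eq_sym (negbTE ab) (negbTE bc).
    + by apply: (set2_neq (w := a)); rewrite !inE ?eqxx ?(negbTE ab) ?(negbTE ac).
    + by apply: (set2_neq (w := a)); rewrite !inE ?eqxx ?(negbTE ab) ?(negbTE ac).
  by move=> P; rewrite !in_cons in_nil orbF => /or3P [] /eqP ->; apply: edge.
have [P PL /andP [PW P3]] := small_link_triangle FG Wsmall Wedges.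
have PeW : P = W by apply/eqP; rewrite eqEcard PW W3 (eqP P3).
by rewrite -PeW -link_mem // dW.
Qed.

Lemma link0_mem (P : {set T}) : (P \in link G set0) = (P \in G).
Proof. by rewrite link_mem ?setU0 // disjoints_subset setC0 subsetT. Qed.

(* Every 4-cycle u x v y of the 1-skeleton spans a 2-face: its four edges
   exceed what an induced subcomplex on 4 vertices may have without one. *)
Lemma square_triangle u x v y :
  u != x -> u != v -> u != y -> x != v -> x != y -> v != y ->
  [set u; x] \in G -> [set x; v] \in G -> [set v; y] \in G -> [set y; u] \in G ->
  exists2 P, P \in G & (P \subset [set u; x; v; y]) && (#|P| == 3).
Proof.
move=> ux uv uy xv xy vy uxG xvG vyG yuG.
have [G0 _] := cG.
have [xu vu yu] : [/\ x != u, v != u & y != u] by rewrite ![_ == u]eq_sym.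
pose E := (negbTE ux, negbTE uv, negbTE uy, negbTE xv, negbTE xy, negbTE vy,
           negbTE xu, negbTE vu).
set W := [set u; x; v; y].
have W4 : #|W| = 4 by rewrite /W -!setUA cardsU1 cardsU1 cards2 !inE ?E.
have [uW xW vW yW] : [/\ u \in W, x \in W, v \in W & y \in W] by rewrite !inE !eqxx ?orbT.
have edge a b : a != b -> a \in W -> b \in W -> [set a; b] \in G ->
    ([set a; b] \in induced (link G set0) W) && (#|[set a; b]| == 2).
  by move=> ab aW bW abG; rewrite inE cards2 ab sub_set2 // !andbT link0_mem.
have Wsmall : 0 < #|W| <= 4 by rewrite W4.
have Wedges : #|W| <= nfaces (induced (link G set0) W) 1.
  rewrite W4; apply: (@nfaces1_ge _ _ [:: [set u; x]; [set x; v]; [set v; y]; [set y; u]]).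
    rewrite /= !in_cons in_nil !orbF andbT !negb_or.
    apply/and3P; split; [apply/and3P; split | apply/andP; split | ].
    1-6: first [ by apply: (set2_neq (w := u)); rewrite !inE ?eqxx ?E
               | by apply: (set2_neq (w := x)); rewrite !inE ?eqxx ?E
               | by apply: (set2_neq (w := v)); rewrite !inE ?eqxx ?E ].
  by move=> P; rewrite !in_cons in_nil orbF => /or4P [] /eqP ->; apply: edge.
by have [P] := small_link_triangle G0 Wsmall Wedges; rewrite link0_mem; exists P.
Qed.

(* A 4-cycle u x v y of the 1-skeleton whose diagonal uv is missing has the
   other diagonal xy, since the 2-face spanned by the cycle contains one of
   the two diagonals: G has no induced 4-cycles. *)
Lemma square_chord u x v y :
  u != x -> u != v -> u != y -> x != v -> x != y -> v != y ->
  [set u; x] \in G -> [set x; v] \in G -> [set v; y] \in G -> [set y; u] \in G ->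
  [set u; v] \notin G -> [set x; y] \in G.
Proof.
move=> ux uv uy xv xy vy uxG xvG vyG yuG uvG.
have [P PG /andP [PW /eqP P3]] := square_triangle ux uv uy xv xy vy uxG xvG vyG yuG.
have W4 : #|[set u; x; v; y]| = 4.
  by rewrite -!setUA cardsU1 cardsU1 cards2 !inE !negb_or ux uv uy xv xy vy.
have [uW xW vW yW] : [/\ u \in [set u; x; v; y], x \in [set u; x; v; y],
  v \in [set u; x; v; y] & y \in [set u; x; v; y]] by rewrite !inE !eqxx ?orbT.
case: (boolP ((u \in P) && (v \in P))) => [/andP [uP vP] | nuv].
  by rewrite (face_down PG (sub_set2 uP vP)) in uvG.
case: (boolP ((x \in P) && (y \in P))) => [/andP [xP yP] | nxy].
  exact: face_down PG (sub_set2 xP yP).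
suff : #|P| <= 4 - 2 by rewrite P3.
rewrite -W4; move: nuv nxy; rewrite !negb_and => /orP [] h1 /orP [] h2;
  by apply: (card_miss2 _ _ _ h1 h2 PW); rewrite // eq_sym.
Qed.

(* By
   induction on the size, all proper subsets of the clique C are faces, and
   for three points a, b, c of C the remaining points F of C span faces with
   each pair, so triangle_filled applies. *)
Lemma clique_face (C : {set T}) : clique (skel_adj G) C -> C \in G.
Proof.
have [G0 [G1 _]] := cG.
elim: {C}_.+1 {-2}C (ltnSn #|C|) => // m IH C Cm clC.
have subface (D : {set T}) z : D \subset C -> z \in C -> z \notin D -> D \in G.
  move=> DC zC zD; apply: IH => [|a b aD bD]; last by apply: clC; apply: (subsetP DC).
  apply: leq_trans (_ : #|D| < #|C|) _; last by rewrite -ltnS.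
  apply: proper_card; rewrite properEneq DC andbT.
  by apply: contraNneq zD => ->.
case: (ltnP 2 #|C|) => [/card_gt2P [a [b [c [[aC bC cC] [ab bc ca]]]]] | C2].
  set F := C :\: [set a; b; c].
  have CE : C = [set a; b; c] :|: F.
    have S3C : [set a; b; c] \subset C.
      by apply/subsetP => z; rewrite !inE -orbA => /or3P [] /eqP ->.
    by rewrite -{1}(setID C [set a; b; c]) (setIidPr S3C).
  have nF z : z \in [set a; b; c] -> z \notin F by rewrite !inE => ->.
  have sub2 x y : x \in C -> y \in C -> [set x; y] :|: F \subset C.
    by move=> xC yC; rewrite subUset sub_set2 // subsetDl.
  have out2 x y z :
      z \in [set a; b; c] -> z != x -> z != y -> z \notin [set x; y] :|: F.
    by move=> zW zx zy; rewrite in_setU in_set2 (negbTE zx) (negbTE zy) /= nF.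
  rewrite CE; apply: triangle_filled; rewrite ?nF ?inE ?eqxx ?orbT // 1?eq_sym //.
  - by apply: (subface _ c); rewrite ?sub2 ?out2 ?inE ?eqxx ?orbT // eq_sym.
  - by apply: (subface _ b); rewrite ?sub2 ?out2 ?inE ?eqxx ?orbT // eq_sym.
  - by apply: (subface _ a); rewrite ?sub2 ?out2 ?inE ?eqxx ?orbT // eq_sym.
case: (ltnP 1 #|C|) => [/card_gt1P [a [b [aC bC ab]]] | C1].
  have -> : C = [set a; b] by apply/esym/eqP; rewrite eqEcard sub_set2 // cards2 ab.
  by have /andP [] := clC a b aC bC ab.
case: (set_0Vmem C) => [-> // | [a aC]].
by have -> : C = [set a] by apply/esym/eqP; rewrite eqEcard sub1set aC cards1.
Qed.

(* Two non-adjacent vertices have a clique as common neighbourhood, since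
   any two common neighbours x, y close a 4-cycle u x v y. *)
Lemma skel_common_nb_clique u v : u != v -> ~~ skel_adj G u v ->
  clique (skel_adj G) (nb (skel_adj G) u :&: nb (skel_adj G) v).
Proof.
rewrite /skel_adj => uv; rewrite uv /= => uvG x y.
rewrite !inE => /andP [/andP [ux uxG] /andP [vx vxG]].
move=> /andP [/andP [uy uyG] /andP [vy vyG]] xy.
by rewrite xy (square_chord ux uv uy _ xy vy uxG) // 1?setUC // eq_sym.
Qed.

End FlagComplexes.

Local Open Scope ring_scope.

(* Real-valued form of card_few_high_degree: at most k + k d + k^2 d
   vertices have at least b n neighbours when k b >= 2 and k^2 d < n, for
   then the degrees of k such vertices add up to at least 2 n > n + k^2 d. *)
Lemma card_high_degree (R : realFieldType) (T : finType) (adj : rel T) (d : nat)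
    (b : R) (k : nat) :
  symmetric adj -> (forall C, clique adj C -> (#|C| <= d)%N) ->
  (forall u v, u != v -> ~~ adj u v -> clique adj (nb adj u :&: nb adj v)) ->
  0 < b -> 2 <= k%:R * b -> (k * (k * d))%:R < #|T|%:R :> R ->
  (#|[set v | (b * #|T|%:R <= #|nb adj v|%:R)%R]| <= k + k * d + k * (k * d))%N.
Proof.
move=> sym small common b0 kb2 kkd.
apply: card_few_high_degree sym small common _ _ _ => J JA _ cJ.
rewrite -(ltr_nat R) natrD natr_sum.
apply: (lt_le_trans (_ : _ < #|T|%:R + #|T|%:R)); first by rewrite ltrD2l.
apply: (le_trans (_ : _ <= \sum_(u in J) b * #|T|%:R)); last first.
  by apply: ler_sum => u /(subsetP JA); rewrite inE.
rewrite sumr_const cJ -(mulr_natl (b * _) k) mulrA -mulr2n -(mulr_natl #|T|%:R 2).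
by apply: ler_wpM2r; first exact: ler0n.
Qed.

(* Some natural multiple of b <= 1 lies in [2, 3) as soon as some multiple
   reaches 2: take the least such multiple. *)
Lemma multiple_in_2_3 (R : realFieldType) (b : R) (N : nat) :
  b <= 1 -> 2 <= N%:R * b -> exists k : nat, 2 <= k%:R * b /\ k%:R * b < 3.
Proof.
move=> b1 hN; have exP : exists k : nat, 2 <= k%:R * b by exists N.
case: (ex_minnP exP) => -[|k] k2 kmin; first by move: k2; rewrite mul0r; lra.
exists k.+1; split => //.
have : ~ 2 <= k%:R * b by move/kmin; rewrite ltnn.
by rewrite -[k.+1%:R]natr1 mulrDl mul1r; lra.
Qed.

(* If 27 d < a b^2 n and k b < 3 then 3 k^2 d < a n, as (k b)^2 < 9. *)
Lemma quadratic_budget (R : realFieldType) (a b k n d : R) :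
  0 < a -> 0 <= n -> 0 < k -> 0 <= k * b -> k * b < 3 ->
  d * 27 < a * b * b * n -> k * k * d * 3 < a * n.
Proof.
move=> a0 n0 k0 kb0 kb3 h.
have h1 : k * k * (d * 27) < (k * b) * (k * b) * (a * n).
  have -> : (k * b) * (k * b) * (a * n) = k * k * (a * b * b * n) by ring.
  by rewrite ltr_pM2l ?mulr_gt0.
have h2 : (k * b) * (k * b) * (a * n) <= 9 * (a * n).
  by apply: ler_wpM2r; [exact: mulr_ge0 (ltW a0) n0 | nra].
lra.
Qed.

Lemma good_multiplier (R : realFieldType) (a b : R) (n d : nat) :
  0 < a -> a <= 1 -> 0 < b -> b <= 1 -> (0 < d)%N ->
  d%:R * 27 < a * b * b * n%:R ->
  exists k : nat, [/\ (0 < k)%N, 2 <= k%:R * b & (k * (k * d))%:R * 3 < a * n%:R].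
Proof.
move=> a0 a1 b0 b1 d1 h27.
have bn1 : 1 <= b * n%:R.
  have : a * b * b * n%:R <= b * n%:R.
    rewrite -mulrA; apply: ler_piMl; first by rewrite mulr_ge0 ?ler0n ?ltW.
    exact: mulr_ile1 (ltW a0) (ltW b0) a1 b1.
  have : 1 <= d%:R :> R by rewrite ler1n.
  lra.
have [k [kb2 kb3]] : exists k : nat, 2 <= k%:R * b /\ k%:R * b < 3.
  apply: (@multiple_in_2_3 _ b (2 * n)%N) => //.
  by rewrite natrM -mulrA [_ * b]mulrC; lra.
have k0 : (0 < k)%N.
  by rewrite lt0n; apply: contraTneq kb2 => ->; rewrite mul0r; lra.
exists k; split => //; rewrite !natrM mulrA.
apply: (quadratic_budget (b := b)) => //; rewrite ?ler0n ?ltr0n //.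
by rewrite mulr_ge0 ?ler0n ?ltW.
Qed.

(* The main theorem, with delta = a b^2 / 27 for a = min e1 1 and
   b = min e2 1: vertices of degree >= e2 n have >= b n neighbours, and
   with k from good_multiplier there are at most 3 k^2 d < a n <= e1 n of
   them by card_high_degree. *)
Theorem mainTheorem6 (K : fieldType) (R : realFieldType) (e1 e2 : R) :
  0 < e1 -> 0 < e2 ->
  exists2 delta : R, 0 < delta &
    forall (T : finType) (G : {set {set T}}) (d : nat),
      is_complex G -> has_dim_plus1 G d ->
      gr1_gt K G 4 ->
      d%:R < delta * #|T|%:R ->
      #|[set v : T | e2 * #|T|%:R <= (degree G v)%:R]|%:R <= e1 * #|T|%:R.
Proof.
move=> e1p e2p; pose a := Num.min e1 1; pose b := Num.min e2 1.
have [a0 a1 ae] : [/\ 0 < a, a <= 1 & a <= e1].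
  by split; rewrite ?lt_min ?e1p ?ltr01 ?ge_min ?lexx ?orbT.
have [b0 b1 be] : [/\ 0 < b, b <= 1 & b <= e2].
  by split; rewrite ?lt_min ?e2p ?ltr01 ?ge_min ?lexx ?orbT.
exists (a * b * b / 27); first by rewrite divr_gt0 ?mulr_gt0.
move=> T G d cG [_ dimG] gr hdn.
have h27 : d%:R * 27 < a * b * b * #|T|%:R by rewrite -ltr_pdivlMr // mulrAC.
have /card_gt0P [v0 _] : (0 < #|T|)%N.
  by rewrite lt0n; apply: contraTneq h27 => ->; rewrite mulr0 -leNgt mulr_ge0 ?ler0n.
have d1 : (0 < d)%N by move: (dimG _ (cG.2.1 v0)); rewrite cards1.
have [k [k0 kb2 kkd]] := good_multiplier a0 a1 b0 b1 d1 h27.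
have kkd_n : (k * (k * d))%:R < #|T|%:R :> R.
  apply: le_lt_trans (lt_le_trans kkd (ler_piMl (ler0n _ _) a1)).
  by rewrite ler_peMr ?ler0n ?ler1n.
have high := card_high_degree (skel_adj_sym G)
  (fun C clC => dimG _ (clique_face gr cG clC)) (skel_common_nb_clique gr cG) b0 kb2 kkd_n.
have sub : [set v : T | e2 * #|T|%:R <= (degree G v)%:R]
    \subset [set v | b * #|T|%:R <= #|nb (skel_adj G) v|%:R].
  apply/subsetP => v; rewrite !inE degree_nb; apply: le_trans.
  by apply: ler_wpM2r; rewrite ?ler0n.
have three_terms : (k + k * d + k * (k * d) <= k * (k * d) * 3)%N by clear -k0 d1; nia.
apply: le_trans (_ : (k * (k * d) * 3)%:R <= _); last first.
  by rewrite natrM; apply: le_trans (ltW kkd) _; apply: ler_wpM2r; rewrite ?ler0n.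
by rewrite ler_nat (leq_trans (subset_leq_card sub)) // (leq_trans high three_terms).
Qed.
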